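(* Let $A,B\in\mathrm{M}_n(\mathbb{C})$ and let $p(x)=\sum_{k=0}^d a_kx^k\in\mathbb{C}[x]$ be a nonconstant polynomial of degree $d\geq 1$. Write $[A,B]=AB-BA$ and $p[A,B]=p(AB)-p(BA)$. Then (i) $\displaystyle \|p[A,B]\|_F\le \|[A,B]\|_F\sum_{k=1}^d |a_k|\,k\,\|A\|_F^{k-1}\|B\|_F^{k-1}$; (ii) $\displaystyle h(p[A,B])\le h([A,B])\sum_{k=1}^d |a_k|\,k\,2^{2k-1}\,h(A)^{k-1}h(B)^{k-1}$.
   Context: $\|X\|_F=\sqrt{\mathrm{trace}(X^*X)}$ is the Frobenius norm and $h(X)=\max\{|v^*Xv| : v\in\mathbb{C}^n,\ \|v\|=1\}$ is the numerical radius of $X\in\mathrm{M}_n(\mathbb{C})$. *)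

From HB Require Import structures.
From mathcomp Require Import all_boot all_order all_algebra.
From mathcomp Require Import complex.
From mathcomp Require Import classical_sets reals.

Set Implicit Arguments.
Unset Strict Implicit.
Unset Printing Implicit Defensive.
Import Order.TTheory GRing.Theory Num.Theory.
Local Open Scope ring_scope.
Local Open Scope classical_set_scope.

Definition cabs (R : realType) (z : R[i]) : R := Normc.normc z.

Definition peval_mx (R : realType) (n : nat) (p : {poly R[i]}) (M : 'M[R[i]]_n)
  : 'M[R[i]]_n := \sum_(k < size p) p`_k *: M ^+ k.

Definition commmx (R : realType) (n : nat) (A B : 'M[R[i]]_n) : 'M[R[i]]_n :=
  A *m B - B *m A.

Definition pcommmx (R : realType) (n : nat) (p : {poly R[i]}) (A B : 'M[R[i]]_n)
  : 'M[R[i]]_n := peval_mx p (A *m B) - peval_mx p (B *m A).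

Definition frob (R : realType) (n : nat) (X : 'M[R[i]]_n) : R :=
  Num.sqrt (\sum_(i < n) \sum_(j < n) cabs (X i j) ^+ 2).

Definition vnorm (R : realType) (n : nat) (v : 'cV[R[i]]_n) : R :=
  Num.sqrt (\sum_(i < n) cabs (v i 0) ^+ 2).

Definition qform (R : realType) (n : nat) (X : 'M[R[i]]_n) (v : 'cV[R[i]]_n)
  : R[i] := ((map_mx conjc v)^T *m X *m v) 0 0.

(* numerical radius h(X) = max { |v^* X v| : ||v|| = 1 } (written as a sup;
   the max is attained in finite dimension) *)
Definition numrad (R : realType) (n : nat) (X : 'M[R[i]]_n) : R :=
  sup [set cabs (qform X v) | v in [set v : 'cV[R[i]]_n | vnorm v = 1]].

From mathcomp Require Import all_boot all_order all_algebra.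
From mathcomp Require Import complex ring lra zify.
From mathcomp Require Import classical_sets reals.
Import Order.TTheory GRing.Theory Num.Theory.
Set Implicit Arguments. Unset Strict Implicit. Unset Printing Implicit Defensive.
Local Open Scope ring_scope.

(* Telescoping gives p(X) - p(Y) = sum_k a_k sum_(j<k) X^j (X - Y) Y^(k-1-j), and
   for X = AB, Y = BA the middle factor is [A,B].  Hence any subadditive,
   absolutely homogeneous N satisfies N(p[A,B]) <= sum_k |a_k| k M_k as soon as
   M_k bounds every N(X^j [A,B] Y^(k-1-j)) with j < k.  For the Frobenius norm,
   submultiplicativity gives M_k = |[A,B]|_F (|A|_F |B|_F)^(k-1).  For the
   numerical radius, polarization bounds the operator norm by 2h, so
   X^j [A,B] Y^(k-1-j) has operator norm at most (4 h(A) h(B))^(k-1) 2 h([A,B]),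
   and h never exceeds the operator norm. *)

Section CauchySchwarz.
Variable R : realFieldType.

Lemma sum_CauchySchwarz (I : finType) (a b : I -> R) :
  (\sum_i a i * b i) ^+ 2 <= (\sum_i a i ^+ 2) * (\sum_i b i ^+ 2).
Proof.
set SA := \sum_i a i ^+ 2; set SB := \sum_i b i ^+ 2; set S := \sum_i _.
have Lagrange : \sum_i \sum_j (a i * b j - a j * b i) ^+ 2 =
    2%:R * (SA * SB - S ^+ 2).
  have -> : \sum_i \sum_j (a i * b j - a j * b i) ^+ 2 =
      \sum_i \sum_j (a i ^+ 2 * b j ^+ 2) + \sum_i \sum_j (b i ^+ 2 * a j ^+ 2)
      - \sum_i \sum_j (2%:R * ((a i * b i) * (a j * b j))).
    rewrite -big_split -sumrB /=; apply: eq_bigr => i _.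
    by rewrite -big_split -sumrB /=; apply: eq_bigr => j _; ring.
  rewrite -!big_distrlr /= -/SA -/SB.
  rewrite (eq_bigr (fun i => 2%:R * ((a i * b i) * S))); last first.
    by move=> i _; rewrite /S !mulr_sumr; apply: eq_bigr.
  by rewrite -mulr_sumr -mulr_suml -/S; ring.
have : 0 <= \sum_i \sum_j (a i * b j - a j * b i) ^+ 2.
  by apply: sumr_ge0 => i _; apply: sumr_ge0 => j _; apply: sqr_ge0.
by rewrite Lagrange pmulr_rge0 ?ltr0n // subr_ge0.
Qed.

End CauchySchwarz.

Section Minkowski.
Variable R : rcfType.

Lemma sum_sqr_ge0 (I : finType) (a : I -> R) : 0 <= \sum_i a i ^+ 2.
Proof. by apply: sumr_ge0 => i _; apply: sqr_ge0. Qed.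

Lemma sum_CauchySchwarz_sqrt (I : finType) (a b : I -> R) :
  \sum_i a i * b i <= Num.sqrt (\sum_i a i ^+ 2) * Num.sqrt (\sum_i b i ^+ 2).
Proof.
rewrite -sqrtrM ?sum_sqr_ge0 //; apply: le_trans (ler_norm _) _.
by rewrite -sqrtr_sqr ler_sqrt ?sum_CauchySchwarz ?mulr_ge0 ?sum_sqr_ge0.
Qed.

Lemma sum_Minkowski_sqrt (I : finType) (a b : I -> R) :
  Num.sqrt (\sum_i (a i + b i) ^+ 2) <=
  Num.sqrt (\sum_i a i ^+ 2) + Num.sqrt (\sum_i b i ^+ 2).
Proof.
rewrite -[leRHS]ger0_norm ?addr_ge0 ?sqrtr_ge0 // -sqrtr_sqr ler_sqrt ?sqr_ge0 //.
have -> : \sum_i (a i + b i) ^+ 2 =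
    \sum_i a i ^+ 2 + 2%:R * \sum_i a i * b i + \sum_i b i ^+ 2.
  by rewrite mulr_sumr -!big_split /=; apply: eq_bigr => i _; ring.
have := sum_CauchySchwarz_sqrt a b.
have := sqr_sqrtr (sum_sqr_ge0 a); have := sqr_sqrtr (sum_sqr_ge0 b).
lra.
Qed.

End Minkowski.

Section Polarization.
Variable C : numClosedFieldType.

Lemma polarization (a b e f : C) (G : C -> C) :
  (forall c, G c = a + c * b + c^* * e + c^* * c * f) ->
  4%:R * b = G 1 - G (-1) - 'i * G 'i + 'i * G (-'i) /\
  4%:R * (a + f) = G 1 + G (-1) + G 'i + G (-'i).
Proof.
move=> G_def; rewrite !G_def conjC1 conjCN1 -conjCi conjCK conjCi.
split; apply/eqP; rewrite eq_sym -subr_eq0; apply/eqP.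
  transitivity (('i ^+ 2 + 1) * (2%:R * e - 2%:R * b)); first by ring.
  by rewrite sqrCi addNr mul0r.
transitivity (('i ^+ 2 + 1) * (- 2%:R * f)); first by ring.
by rewrite sqrCi addNr mul0r.
Qed.

End Polarization.

Section ComplexModulus.
Variable R : realType.
Local Notation C := R[i].
Implicit Types x y : C.

Lemma cabsE x : `|x| = (cabs x)%:C%C.
Proof. by rewrite normc_def; case: x. Qed.

Lemma cabs_ge0 x : 0 <= cabs x.
Proof. exact: (@normr_ge0 R (Rcomplex R)). Qed.

Lemma cabs0 : cabs (0 : C) = 0.
Proof. exact: Normc.normc0. Qed.

Lemma ler_cabsD x y : cabs (x + y) <= cabs x + cabs y.
Proof. exact: le_normcD. Qed.

Lemma cabsN x : cabs (- x) = cabs x.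
Proof. exact: normcN. Qed.

Lemma cabsM x y : cabs (x * y) = cabs x * cabs y.
Proof. exact: Normc.normcM. Qed.

Lemma cabsJ x : cabs x^* = cabs x.
Proof. by apply: complexI; rewrite -!cabsE norm_conjC. Qed.

Lemma cabs_sqr x : (cabs x ^+ 2)%:C%C = x * x^*.
Proof. by rewrite rmorphXn /= -cabsE normCK. Qed.

Lemma ger0_cabs (r : R) : 0 <= r -> cabs r%:C%C = r.
Proof. by move=> r0; apply: complexI; rewrite -cabsE ger0_norm // ler0c. Qed.

Lemma cabs_i : cabs 'i = 1 :> R.
Proof. by apply: complexI; rewrite -cabsE normCi. Qed.

Lemma ler_cabs_sum (I : Type) (r : seq I) (F : I -> C) :
  cabs (\sum_(i <- r) F i) <= \sum_(i <- r) cabs (F i).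
Proof. exact: (@ler_norm_sum R (Rcomplex R)). Qed.


End ComplexModulus.

Section FrobeniusNorm.
Variable R : realType.
Local Notation C := R[i].

Definition fnorm m p (X : 'M[C]_(m, p)) : R :=
  Num.sqrt (\sum_(i < m) \sum_(j < p) cabs (X i j) ^+ 2).

Lemma frobE n (X : 'M[C]_n) : frob X = fnorm X.
Proof. by []. Qed.

Lemma vnormE n (v : 'cV[C]_n) : vnorm v = fnorm v.
Proof. by congr Num.sqrt; apply: eq_bigr => i _; rewrite big_ord1. Qed.

Lemma fnorm_ge0 m p (X : 'M[C]_(m, p)) : 0 <= fnorm X.
Proof. exact: sqrtr_ge0. Qed.

Lemma fnorm_scalar (M : 'M[C]_1) : fnorm M = cabs (M 0 0).
Proof. by rewrite /fnorm !big_ord1 sqrtr_sqr ger0_norm ?cabs_ge0. Qed.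

Lemma fnorm_conjT m p (X : 'M[C]_(m, p)) : fnorm (map_mx conjc X)^T = fnorm X.
Proof.
rewrite /fnorm exchange_big; congr Num.sqrt; apply: eq_bigr => i _.
by apply: eq_bigr => j _; rewrite !mxE cabsJ.
Qed.

Lemma fnormZ m p (c : C) (X : 'M[C]_(m, p)) : fnorm (c *: X) = cabs c * fnorm X.
Proof.
rewrite /fnorm -[cabs c]ger0_norm ?cabs_ge0 // -sqrtr_sqr -sqrtrM ?sqr_ge0 //.
congr Num.sqrt; rewrite mulr_sumr; apply: eq_bigr => i _; rewrite mulr_sumr.
by apply: eq_bigr => j _; rewrite mxE cabsM exprMn.
Qed.

Lemma ler_fnormD m p (X Y : 'M[C]_(m, p)) : fnorm (X + Y) <= fnorm X + fnorm Y.
Proof.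
rewrite /fnorm !pair_big /=.
apply: le_trans (sum_Minkowski_sqrt (fun q => cabs (X q.1 q.2)) (fun q => cabs (Y q.1 q.2))).
rewrite ler_sqrt ?sum_sqr_ge0 //; apply: ler_sum => q _.
by rewrite mxE lerXn2r ?nnegrE ?addr_ge0 ?cabs_ge0 ?ler_cabsD.
Qed.

Lemma ler_fnormM m k p (X : 'M[C]_(m, k)) (Y : 'M[C]_(k, p)) :
  fnorm (X *m Y) <= fnorm X * fnorm Y.
Proof.
rewrite /fnorm -sqrtrM; last by apply: sumr_ge0 => i _; apply: sum_sqr_ge0.
rewrite ler_sqrt; last by apply: mulr_ge0; apply: sumr_ge0 => i _; apply: sum_sqr_ge0.
rewrite [S in _ * S]exchange_big big_distrlr /=.
apply: ler_sum => i _; apply: ler_sum => j _; rewrite mxE.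
apply: le_trans (sum_CauchySchwarz (fun l => cabs (X i l)) (fun l => cabs (Y l j))).
rewrite lerXn2r ?nnegrE ?cabs_ge0 //.
  by apply: sumr_ge0 => l _; rewrite mulr_ge0 ?cabs_ge0.
by apply: le_trans (ler_cabs_sum _ _) _; apply: ler_sum => l _; rewrite cabsM.
Qed.

Lemma ler_fnormXl n (X Z : 'M[C]_n) j : fnorm (X ^+ j * Z) <= fnorm X ^+ j * fnorm Z.
Proof.
elim: j => [|j IHj]; first by rewrite !expr0 !mul1r.
rewrite exprS -mulrA [fnorm X ^+ _]exprS -mulrA.
apply: le_trans (ler_fnormM _ _) _.
by rewrite ler_wpM2l ?fnorm_ge0.
Qed.

Lemma ler_fnormXr n (X Z : 'M[C]_n) j : fnorm (Z * X ^+ j) <= fnorm Z * fnorm X ^+ j.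
Proof.
elim: j => [|j IHj]; first by rewrite !expr0 !mulr1.
rewrite exprSr mulrA [fnorm X ^+ _]exprSr mulrA.
apply: le_trans (ler_fnormM _ _) _.
by rewrite ler_wpM2r ?fnorm_ge0.
Qed.

End FrobeniusNorm.

Section QuadraticForm.
Variables (R : realType) (n : nat).
Local Notation C := R[i].
Implicit Types (X Y : 'M[C]_n) (u v w : 'cV[C]_n).

(* [x^*] is the conjugation of the closed field [R[i]]; it reduces to the
   [conjc] used in [qform], which is what [vdotE] relies on. *)
Definition vdot u w : C := \sum_i (u i 0)^* * w i 0.

Lemma vdotE u w : vdot u w = ((map_mx conjc u)^T *m w) 0 0.
Proof. by rewrite mxE; apply: eq_bigr => i _; rewrite !mxE. Qed.

Lemma qformE X v : qform X v = vdot v (X *m v).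
Proof. by rewrite /qform -mulmxA vdotE. Qed.

Lemma vdot_CauchySchwarz u w : cabs (vdot u w) <= fnorm u * fnorm w.
Proof. by rewrite vdotE -fnorm_scalar -[fnorm u]fnorm_conjT; apply: ler_fnormM. Qed.

Lemma vdotvv v : vdot v v = (fnorm v ^+ 2)%:C%C.
Proof.
rewrite /fnorm sqr_sqrtr; last by apply: sumr_ge0 => i _; apply: sum_sqr_ge0.
rewrite rmorph_sum; apply: eq_bigr => i _.
by rewrite big_ord1 mulrC -cabs_sqr.
Qed.

Lemma vdotDl u w z : vdot (u + w) z = vdot u z + vdot w z.
Proof.
rewrite /vdot -big_split; apply: eq_bigr => i _ /=.
by rewrite mxE rmorphD mulrDl.
Qed.

Lemma vdotDr u w z : vdot z (u + w) = vdot z u + vdot z w.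
Proof.
rewrite /vdot -big_split; apply: eq_bigr => i _ /=.
by rewrite mxE mulrDr.
Qed.

Lemma vdotZl c u z : vdot (c *: u) z = c^* * vdot u z.
Proof.
rewrite /vdot mulr_sumr; apply: eq_bigr => i _.
by rewrite mxE rmorphM mulrA.
Qed.

Lemma vdotZr c u z : vdot z (c *: u) = c * vdot z u.
Proof.
rewrite /vdot mulr_sumr; apply: eq_bigr => i _.
by rewrite mxE mulrCA.
Qed.

Lemma qform_addZ X u w c :
  qform X (u + c *: w) = qform X u + c * vdot u (X *m w)
                         + c^* * vdot w (X *m u) + c^* * c * qform X w.
Proof.
rewrite !qformE mulmxDr -scalemxAr !(vdotDl, vdotDr, vdotZl, vdotZr); ring.
Qed.

Lemma qformZ X c v : qform X (c *: v) = c^* * c * qform X v.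
Proof. by rewrite !qformE -scalemxAr vdotZl vdotZr mulrA. Qed.

Lemma qformDl X Y v : qform (X + Y) v = qform X v + qform Y v.
Proof. by rewrite !qformE mulmxDl vdotDr. Qed.

Lemma qformZl X c v : qform (c *: X) v = c * qform X v.
Proof. by rewrite !qformE -scalemxAl vdotZr. Qed.

Lemma sqr_fnorm_addZ u w c :
  (fnorm (u + c *: w) ^+ 2)%:C%C = (fnorm u ^+ 2)%:C%C + c * vdot u w
                                   + c^* * vdot w u + c^* * c * (fnorm w ^+ 2)%:C%C.
Proof. by rewrite -!vdotvv !(vdotDl, vdotDr, vdotZl, vdotZr); ring. Qed.

Lemma qform_le_frob X v : cabs (qform X v) <= frob X * fnorm v ^+ 2.
Proof.
rewrite qformE; apply: le_trans (vdot_CauchySchwarz _ _) _.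
by rewrite expr2 mulrCA ler_wpM2l ?fnorm_ge0 ?ler_fnormM.
Qed.

End QuadraticForm.

Section NumericalRadius.
Variables (R : realType) (n : nat).
Local Notation C := R[i].
Implicit Types (X Y : 'M[C]_n) (u v w : 'cV[C]_n).
Local Open Scope classical_set_scope.

Lemma numrad_ub X v : vnorm v = 1 -> cabs (qform X v) <= numrad X.
Proof.
move=> v1; apply: ub_le_sup; last by exists v.
exists (frob X) => _ [w w1 <-].
by apply: le_trans (qform_le_frob _ _) _; rewrite -vnormE w1 expr1n mulr1.
Qed.

Lemma numrad_le X c : 0 <= c ->
  (forall v, vnorm v = 1 -> cabs (qform X v) <= c) -> numrad X <= c.
Proof.
rewrite /numrad => c0 qformX_le; set S := [set _ | _ in _].
have [->|/set0P S0] := eqVneq S set0; first by rewrite sup0.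
by apply: ge_sup => // _ [v /qformX_le ? <-].
Qed.

Lemma numrad_ge0 X : 0 <= numrad X.
Proof.
rewrite /numrad; set S := [set _ | _ in _].
have [->|/set0P [_ [v v1 _]]] := eqVneq S set0; first by rewrite sup0.
exact: le_trans (cabs_ge0 _) (numrad_ub X v1).
Qed.

Lemma ler_numradD X Y : numrad (X + Y) <= numrad X + numrad Y.
Proof.
apply: numrad_le => [|v v1]; first by rewrite addr_ge0 ?numrad_ge0.
rewrite qformDl; apply: le_trans (ler_cabsD _ _) _.
by rewrite lerD ?numrad_ub.
Qed.

Lemma ler_numradZ c X : numrad (c *: X) <= cabs c * numrad X.
Proof.
apply: numrad_le => [|v v1]; first by rewrite mulr_ge0 ?cabs_ge0 ?numrad_ge0.
by rewrite qformZl cabsM ler_wpM2l ?cabs_ge0 ?numrad_ub.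
Qed.

Lemma qform_le_numrad X v : cabs (qform X v) <= numrad X * fnorm v ^+ 2.
Proof.
have [v0|v_neq0] := eqVneq (fnorm v) 0.
  by apply: le_trans (qform_le_frob _ _) _; rewrite v0 expr0n /= !mulr0.
have v_gt0 : 0 < fnorm v by rewrite lt_def v_neq0 fnorm_ge0.
have cv : cabs (fnorm v)^-1%:C%C = (fnorm v)^-1 by rewrite ger0_cabs ?invr_ge0 ?ltW.
have v1 : vnorm ((fnorm v)^-1%:C%C *: v) = 1 by rewrite vnormE fnormZ cv mulVf.
have := numrad_ub X v1; rewrite qformZ !cabsM cabsJ cv.
by rewrite -ler_pdivrMr ?exprn_gt0 // mulrC -exprVn expr2.
Qed.

Lemma vdot_le_numrad X u w :
  cabs (vdot u (X *m w)) <= numrad X * (fnorm u ^+ 2 + fnorm w ^+ 2).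
Proof.
(* Polarization writes [4 * vdot u (X *m w)] through [qform X (u + c *: w)] for
   c = 1, -1, 'i, -'i, and the squared norms of these four vectors sum to
   [4 * (|u|^2 + |w|^2)]. *)
have [polX _] := polarization (qform_addZ X u w).
have [_ pol1] := polarization (sqr_fnorm_addZ u w).
pose L c := fnorm (u + c *: w) ^+ 2.
have sumL : 4%:R * (fnorm u ^+ 2 + fnorm w ^+ 2) = L 1 + L (-1) + L 'i + L (-'i).
  by apply: complexI; rewrite rmorphM rmorph_nat !rmorphD.
have G_le c : cabs (qform X (u + c *: w)) <= numrad X * L c.
  exact: qform_le_numrad.
have cabs4 : cabs (4%:R : C) = 4%:R.
  by rewrite -(rmorph_nat (real_complex R)) ger0_cabs ?ler0n.
rewrite -(ler_pM2l (_ : 0 < 4%:R :> R)) ?ltr0n // mulrCA sumL !mulrDr.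
rewrite -[4%:R in leLHS]cabs4 -cabsM polX.
apply: le_trans (ler_cabsD _ _) _; apply: lerD; last by rewrite cabsM cabs_i mul1r G_le.
apply: le_trans (ler_cabsD _ _) _; apply: lerD; last by rewrite cabsN cabsM cabs_i mul1r G_le.
apply: le_trans (ler_cabsD _ _) _; apply: lerD; first exact: G_le.
by rewrite cabsN G_le.
Qed.

Definition opnorm_le X (c : R) := forall w, fnorm (X *m w) <= c * fnorm w.

Lemma opnorm_le_numrad X : opnorm_le X (2%:R * numrad X).
Proof.
(* Apply [vdot_le_numrad] to [b *: X w] and [a *: w], where [a = |X w|], [b = |w|]. *)
move=> w; set a := fnorm (X *m w); set b := fnorm w; set h := numrad X.
have [b0|b_neq0] := eqVneq b 0.
  by have := ler_fnormM X w; rewrite -/a -/b b0 !mulr0.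
have [->|a_neq0] := eqVneq a 0; first by rewrite mulr_ge0 ?mulr_ge0 ?numrad_ge0 ?fnorm_ge0.
have a_gt0 : 0 < a by rewrite lt_def a_neq0 fnorm_ge0.
have b_gt0 : 0 < b by rewrite lt_def b_neq0 fnorm_ge0.
have := vdot_le_numrad X (b%:C%C *: (X *m w)) (a%:C%C *: w).
rewrite vdotZl -scalemxAr vdotZr vdotvv !fnormZ !cabsM cabsJ.
rewrite !ger0_cabs ?sqr_ge0 ?(ltW a_gt0) ?(ltW b_gt0) //.
rewrite -/a -/b -/h.
have -> : b * (a * a ^+ 2) = (a ^+ 2 * b) * a by ring.
have -> : h * ((b * a) ^+ 2 + (a * b) ^+ 2) = (a ^+ 2 * b) * (2%:R * h * b) by ring.
by rewrite ler_pM2l ?mulr_gt0 ?exprn_gt0.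
Qed.

Lemma opnorm_leM X Y c d :
  0 <= c -> opnorm_le X c -> opnorm_le Y d -> opnorm_le (X * Y) (c * d).
Proof.
move=> c0 Xc Yd w; rewrite -mulmxA; apply: le_trans (Xc _) _.
by rewrite -mulrA ler_wpM2l.
Qed.

Lemma opnorm_leX X c : 0 <= c -> opnorm_le X c -> forall j, opnorm_le (X ^+ j) (c ^+ j).
Proof.
move=> c0 Xc; elim=> [|j IHj]; first by move=> w; rewrite !expr0 mul1mx mul1r.
by rewrite !exprS; apply: opnorm_leM.
Qed.

Lemma numrad_le_opnorm X c : 0 <= c -> opnorm_le X c -> numrad X <= c.
Proof.
move=> c0 Xc; apply: numrad_le => // v v1.
rewrite qformE; apply: le_trans (vdot_CauchySchwarz _ _) _.
by have := Xc v; rewrite -[fnorm v]vnormE v1 mul1r mulr1.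
Qed.

End NumericalRadius.

Lemma subrX_telescope (T : pzRingType) (X Y : T) k :
  X ^+ k - Y ^+ k = \sum_(j < k) X ^+ j * (X - Y) * Y ^+ (k.-1 - j).
Proof.
elim: k => [|k IHk]; first by rewrite big_ord0 !expr0 subrr.
rewrite big_ord_recr /= subnn expr0 mulr1.
have -> : \sum_(j < k) X ^+ j * (X - Y) * Y ^+ (k - j) =
          (\sum_(j < k) X ^+ j * (X - Y) * Y ^+ (k.-1 - j)) * Y.
  rewrite mulr_suml; apply: eq_bigr => j _; rewrite -[RHS]mulrA -exprSr.
  by congr (_ * _ * Y ^+ _); have := ltn_ord j; lia.
by rewrite -IHk mulrBl mulrBr -!exprSr addrC addrA subrK.
Qed.

Lemma expr_sandwichE (R : comPzRingType) (x a b c : R) j m :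
  (x * a * (x * b)) ^+ j * (x * c) * (x * b * (x * a)) ^+ m =
  c * (x ^+ (2 * (j + m)).+1 * (a ^+ (j + m) * b ^+ (j + m))).
Proof. by rewrite exprS mulnDr !exprD !expr0 !mulr1 !exprMn; ring. Qed.

Lemma peval_mxB (R : realType) n (p : {poly R[i]}) (X Y : 'M[R[i]]_n) :
  peval_mx p X - peval_mx p Y =
  \sum_(k < size p) p`_k *: \sum_(j < k) X ^+ j * (X - Y) * Y ^+ (k.-1 - j).
Proof.
rewrite /peval_mx -sumrB; apply: eq_bigr => k _.
by rewrite -scalerBr subrX_telescope.
Qed.

Section SubadditiveBound.
Variables (R : realType) (n : nat) (N : 'M[R[i]]_n -> R).
Hypothesis ND : forall X Y, N (X + Y) <= N X + N Y.
Hypothesis NZ : forall c X, N (c *: X) <= cabs c * N X.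

Lemma subadditive_sum_le (I : Type) (r : seq I) (F : I -> 'M[R[i]]_n) :
  N (\sum_(i <- r) F i) <= \sum_(i <- r) N (F i).
Proof.
elim: r => [|i r IHr]; last by rewrite !big_cons (le_trans (ND _ _)) ?lerD.
by have := NZ 0 0; rewrite scale0r cabs0 mul0r !big_nil.
Qed.

Lemma peval_mxB_le (p : {poly R[i]}) (X Y : 'M[R[i]]_n) (gamma : R) (g : nat -> R) :
  (forall k j, (j < k)%N -> N (X ^+ j * (X - Y) * Y ^+ (k.-1 - j)) <= gamma * g k) ->
  N (peval_mx p X - peval_mx p Y) <=
  gamma * \sum_(1 <= k < size p) cabs p`_k * (k%:R * g k).
Proof.
move=> term_le; rewrite peval_mxB; apply: le_trans (subadditive_sum_le _ _) _.
have -> : gamma * \sum_(1 <= k < size p) cabs p`_k * (k%:R * g k) =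
          \sum_(k < size p) cabs p`_k * \sum_(j < k) gamma * g k.
  rewrite mulr_sumr -(big_mkord xpredT (fun k => cabs p`_k * \sum_(j < k) gamma * g k)).
  case: (size p) => [|s]; first by rewrite !big_geq.
  rewrite [in RHS]big_ltn // big_ord0 mulr0 add0r; apply: eq_bigr => k _.
  by rewrite sumr_const card_ord -mulr_natl; ring.
apply: ler_sum => k _; apply: le_trans (NZ _ _) _; rewrite ler_wpM2l ?cabs_ge0 //.
by apply: le_trans (subadditive_sum_le _ _) _; apply: ler_sum => j _; apply: term_le.
Qed.

End SubadditiveBound.

Section CommutatorTerms.
Variables (R : realType) (n : nat) (A B : 'M[R[i]]_n).

Lemma frob_commutator_term_le k j : (j < k)%N ->
  frob ((A *m B) ^+ j * commmx A B * (B *m A) ^+ (k.-1 - j)) <=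
  frob (commmx A B) * (frob A ^+ k.-1 * frob B ^+ k.-1).
Proof.
move=> jk; set m := (k.-1 - j)%N; have -> : k.-1 = (j + m)%N by rewrite /m; lia.
rewrite !frobE; apply: le_trans (ler_fnormXr _ _ _) _.
apply: le_trans (ler_wpM2r (exprn_ge0 _ (fnorm_ge0 _)) (ler_fnormXl _ _ _)) _.
have -> : fnorm (commmx A B) * (fnorm A ^+ (j + m) * fnorm B ^+ (j + m)) =
    (fnorm A * fnorm B) ^+ j * fnorm (commmx A B) * (fnorm B * fnorm A) ^+ m.
  by rewrite !exprMn !exprD; ring.
rewrite ler_pM ?mulr_ge0 ?exprn_ge0 ?ler_wpM2r ?fnorm_ge0 //.
  by apply: lerXn2r; rewrite ?nnegrE ?mulr_ge0 ?fnorm_ge0 ?ler_fnormM.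
by apply: lerXn2r; rewrite ?nnegrE ?mulr_ge0 ?fnorm_ge0 ?ler_fnormM.
Qed.

Lemma numrad_commutator_term_le k j : (j < k)%N ->
  numrad ((A *m B) ^+ j * commmx A B * (B *m A) ^+ (k.-1 - j)) <=
  numrad (commmx A B) *
    (2%:R ^+ (2 * k).-1 * (numrad A ^+ k.-1 * numrad B ^+ k.-1)).
Proof.
move=> jk; set m := (k.-1 - j)%N.
have -> : (2 * k).-1 = (2 * (j + m)).+1 by rewrite /m; lia.
have -> : k.-1 = (j + m)%N by rewrite /m; lia.
rewrite -expr_sandwichE.
have hA2 : 0 <= 2%:R * numrad A by rewrite mulr_ge0 ?numrad_ge0.
have hB2 : 0 <= 2%:R * numrad B by rewrite mulr_ge0 ?numrad_ge0.
have hC2 : 0 <= 2%:R * numrad (commmx A B) by rewrite mulr_ge0 ?numrad_ge0.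
have AB_op := opnorm_leM hA2 (opnorm_le_numrad A) (opnorm_le_numrad B).
have BA_op := opnorm_leM hB2 (opnorm_le_numrad B) (opnorm_le_numrad A).
have ABj_op := opnorm_leX (mulr_ge0 hA2 hB2) AB_op j.
have BAm_op := opnorm_leX (mulr_ge0 hB2 hA2) BA_op m.
have ABj_ge0 := exprn_ge0 j (mulr_ge0 hA2 hB2).
have BAm_ge0 := exprn_ge0 m (mulr_ge0 hB2 hA2).
apply: numrad_le_opnorm; first exact: mulr_ge0 (mulr_ge0 ABj_ge0 hC2) BAm_ge0.
apply: opnorm_leM BAm_op; first exact: mulr_ge0 ABj_ge0 hC2.
exact: opnorm_leM ABj_ge0 ABj_op (opnorm_le_numrad _).
Qed.

End CommutatorTerms.

Theorem theorem5p1 (R : realType) (n : nat) (A B : 'M[R[i]]_n)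
    (p : {poly R[i]}) (hp : (1 < size p)%N) :
  let d := (size p).-1 in
  frob (pcommmx p A B)
    <= frob (commmx A B) *
       \sum_(1 <= k < d.+1) cabs p`_k * k%:R * frob A ^+ k.-1 * frob B ^+ k.-1
  /\
  numrad (pcommmx p A B)
    <= numrad (commmx A B) *
       \sum_(1 <= k < d.+1)
          cabs p`_k * k%:R * 2%:R ^+ (2 * k).-1 * numrad A ^+ k.-1 * numrad B ^+ k.-1.
Proof.
move=> d; rewrite /d prednK ?(ltnW hp) // /pcommmx.
split; under eq_bigr do rewrite -!mulrA.
- apply: peval_mxB_le; [exact: ler_fnormD | | exact: frob_commutator_term_le].
  by move=> c X; rewrite !frobE fnormZ.
- apply: peval_mxB_le; [exact: ler_numradD | exact: ler_numradZ |].
  exact: numrad_commutator_term_le.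
Qed.
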